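(* There exists a constant $L>0$ such that for all symmetric matrices $Q,\delta Q\in\mathbb{R}^{3\times3}$, $|P(Q+\delta Q)-P(Q)|_F\le L\,|\delta Q|_F$.
   Context: Let $a,b\in\mathbb{R}$, $c>0$, and $A_0>0$ such that $\inf\{\frac a2\operatorname{tr}(Q^2)-\frac b3\operatorname{tr}(Q^3)+\frac c4(\operatorname{tr}(Q^2))^2+A_0:\ Q\in\mathbb{R}^{3\times3}\text{ symmetric}\}>0$. For symmetric $Q\in\mathbb{R}^{3\times3}$ define $r(Q)=\sqrt{2\big(\frac a2\operatorname{tr}(Q^2)-\frac b3\operatorname{tr}(Q^3)+\frac c4(\operatorname{tr}(Q^2))^2+A_0\big)}$, $S(Q)=aQ-b\big(Q^2-\frac13\operatorname{tr}(Q^2)I\big)+c\operatorname{tr}(Q^2)Q$, and $P(Q)=S(Q)/r(Q)$. $|A|_F=\sqrt{\sum_{i,j}A_{ij}^2}$ is the Frobenius norm. *)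

From HB Require Import structures.
From mathcomp Require Import all_boot all_order all_algebra.
From mathcomp Require Import reals.
Set Implicit Arguments. Unset Strict Implicit. Unset Printing Implicit Defensive.
Import Order.TTheory GRing.Theory Num.Theory.
Local Open Scope ring_scope.

Section LdG.
Variable R : realType.
Variables a b c A0 : R.

Definition ldg_energy (Q : 'M[R]_3) : R :=
  a / 2 * \tr (Q *m Q) - b / 3 * \tr (Q *m Q *m Q)
  + c / 4 * (\tr (Q *m Q)) ^+ 2 + A0.

Definition ldg_r (Q : 'M[R]_3) : R := Num.sqrt (2 * ldg_energy Q).

Definition ldg_S (Q : 'M[R]_3) : 'M[R]_3 :=
  a *: Q - b *: (Q *m Q - (\tr (Q *m Q) / 3) *: 1%:M) + (c * \tr (Q *m Q)) *: Q.

Definition ldg_P (Q : 'M[R]_3) : 'M[R]_3 := (ldg_r Q)^-1 *: ldg_S Q.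
End LdG.

Definition frob_norm (R : realType) (A : 'M[R]_3) : R :=
  Num.sqrt (\sum_(i < 3) \sum_(j < 3) A i j ^+ 2).

Definition symm3 (R : realType) (A : 'M[R]_3) : Prop := A^T = A.

(* Work with the entrywise l1 norm |A|_1, which is submultiplicative and
   equivalent to the Frobenius norm (|A|_F <= |A|_1 <= 9 |A|_F).  For symmetric
   Q, tr(Q^2) = |Q|_F^2 >= |Q|_1^2 / 81, so the quartic term dominates the
   energy; combined with its positive lower bound this gives
   r(Q) >= be (1 + |Q|_1^2).  Since S is cubic, for |X|_1 <= |Y|_1 = y we get
   |S(Y) - S(X)|_1 = O((1 + y^2) |Y - X|_1), |S(X)|_1 = O((1 + y)(1 + |X|_1^2))
   and |E(Y) - E(X)| = O((1 + y)(1 + y^2) |Y - X|_1).  In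
     P(Y) - P(X) = (S(Y) - S(X)) / r(Y) + (1/r(Y) - 1/r(X)) S(X),
   with |1/r(Y) - 1/r(X)| <= |r(Y)^2 - r(X)^2| / (r(Y)^2 r(X))
   = 2 |E(Y) - E(X)| / (r(Y)^2 r(X)), every growing factor is then cancelled
   by the lower bound on r. *)

From HB Require Import structures.
From mathcomp Require Import all_boot all_order all_algebra.
From mathcomp Require Import reals.
From mathcomp Require Import ring lra.
Set Implicit Arguments. Unset Strict Implicit. Unset Printing Implicit Defensive.
Import Order.TTheory GRing.Theory Num.Theory.
Local Open Scope ring_scope.

Section L1Norm.
Variable R : numDomainType.

Definition l1norm m n (A : 'M[R]_(m, n)) : R := \sum_i \sum_j `|A i j|.

Lemma l1norm_ge0 m n (A : 'M[R]_(m, n)) : 0 <= l1norm A.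
Proof. by apply: sumr_ge0 => i _; apply: sumr_ge0. Qed.

Lemma l1normD m n (A B : 'M[R]_(m, n)) : l1norm (A + B) <= l1norm A + l1norm B.
Proof.
rewrite -big_split; apply: ler_sum => i _.
by rewrite -big_split; apply: ler_sum => j _; rewrite mxE ler_normD.
Qed.

Lemma l1normZ m n (k : R) (A : 'M[R]_(m, n)) : l1norm (k *: A) = `|k| * l1norm A.
Proof.
rewrite /l1norm mulr_sumr; apply: eq_bigr => i _.
by rewrite mulr_sumr; apply: eq_bigr => j _; rewrite mxE normrM.
Qed.

Lemma l1normN m n (A : 'M[R]_(m, n)) : l1norm (- A) = l1norm A.
Proof. by rewrite -scaleN1r l1normZ normrN1 mul1r. Qed.

Lemma l1normB m n (A B : 'M[R]_(m, n)) : l1norm (A - B) <= l1norm A + l1norm B.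
Proof. by rewrite -(l1normN B) l1normD. Qed.

Lemma row_l1norm_le m n (A : 'M[R]_(m, n)) i : \sum_j `|A i j| <= l1norm A.
Proof.
by rewrite /l1norm (bigD1 i) //= lerDl; apply: sumr_ge0 => k _; apply: sumr_ge0.
Qed.

Lemma normr_le_l1norm m n (A : 'M[R]_(m, n)) i j : `|A i j| <= l1norm A.
Proof.
apply: le_trans (row_l1norm_le A i).
by rewrite (bigD1 j) //= lerDl sumr_ge0.
Qed.

Lemma l1normM m n p (A : 'M[R]_(m, n)) (B : 'M[R]_(n, p)) :
  l1norm (A *m B) <= l1norm A * l1norm B.
Proof.
rewrite /l1norm mulr_suml; apply: ler_sum => i _.
apply: (@le_trans _ _ (\sum_j \sum_k `|A i k| * `|B k j|)).
  apply: ler_sum => j _; rewrite mxE.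
  by apply: le_trans (ler_norm_sum _ _ _) _; apply: ler_sum => k _; rewrite normrM.
rewrite exchange_big mulr_suml; apply: ler_sum => k _.
by rewrite -mulr_sumr ler_wpM2l ?row_l1norm_le.
Qed.

Lemma l1normM3 m n p q (A : 'M[R]_(m, n)) (B : 'M[R]_(n, p)) (C : 'M[R]_(p, q)) :
  l1norm (A *m B *m C) <= l1norm A * l1norm B * l1norm C.
Proof.
apply: le_trans (l1normM _ _) _.
by rewrite ler_wpM2r ?l1norm_ge0 ?l1normM.
Qed.

Lemma normr_tr_le_l1norm n (A : 'M[R]_n) : `|\tr A| <= l1norm A.
Proof.
apply: le_trans (ler_norm_sum _ _ _) _; apply: ler_sum => i _.
by rewrite (bigD1 i) //= lerDl sumr_ge0.
Qed.

Lemma l1norm1 n : l1norm (1%:M : 'M[R]_n) = n%:R.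
Proof.
rewrite /l1norm -[n in RHS]card_ord -sumr_const; apply: eq_bigr => i _.
rewrite (bigD1 i) //= big1 => [|j /negPf ji]; rewrite mxE ?eqxx ?normr1 ?addr0 //.
by rewrite eq_sym ji normr0.
Qed.

Lemma l1norm_sqr_sub n (X Y : 'M[R]_n) :
  l1norm (Y *m Y - X *m X) <= (l1norm Y + l1norm X) * l1norm (Y - X).
Proof.
have -> : Y *m Y - X *m X = Y *m (Y - X) + (Y - X) *m X.
  by rewrite mulmxBr mulmxBl addrA subrK.
apply: le_trans (l1normD _ _) _.
by rewrite mulrDl [l1norm X * _]mulrC lerD ?l1normM.
Qed.

Lemma l1norm_cube_sub n (X Y : 'M[R]_n) :
  l1norm (Y *m Y *m Y - X *m X *m X) <=
  (l1norm Y ^+ 2 + l1norm Y * l1norm X + l1norm X ^+ 2) * l1norm (Y - X).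
Proof.
have -> : Y *m Y *m Y - X *m X *m X =
    Y *m Y *m (Y - X) + Y *m (Y - X) *m X + (Y - X) *m X *m X.
  by rewrite !mulmxBr !mulmxBl !addrA !subrK.
apply: le_trans (l1normD _ _) _; rewrite !mulrDl.
apply: lerD; first apply: le_trans (l1normD _ _) _; first apply: lerD.
- by apply: le_trans (l1normM3 _ _ _) _; rewrite expr2.
- by apply: le_trans (l1normM3 _ _ _) _; rewrite mulrAC.
- by apply: le_trans (l1normM3 _ _ _) _; rewrite mulrAC -mulrA -expr2 mulrC.
Qed.

Lemma normr_tr_sqr_le n (X : 'M[R]_n) : `|\tr (X *m X)| <= l1norm X ^+ 2.
Proof. by apply: le_trans (normr_tr_le_l1norm _) _; rewrite expr2 l1normM. Qed.

Lemma l1norm_sqr_sub_le n (X Y : 'M[R]_n) : l1norm X <= l1norm Y ->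
  l1norm (Y *m Y - X *m X) <= 2 * l1norm Y * l1norm (Y - X).
Proof.
move=> leXY; apply: le_trans (l1norm_sqr_sub X Y) _.
by rewrite ler_wpM2r ?l1norm_ge0 // mulr_natl mulr2n lerD2l.
Qed.

Lemma normr_tr_sqr_sub_le n (X Y : 'M[R]_n) : l1norm X <= l1norm Y ->
  `|\tr (Y *m Y) - \tr (X *m X)| <= 2 * l1norm Y * l1norm (Y - X).
Proof.
by move=> leXY; rewrite -linearB (le_trans (normr_tr_le_l1norm _)) ?l1norm_sqr_sub_le.
Qed.

End L1Norm.

Lemma quartic_dominates (R : realFieldType) (g p q : R) : 0 < g ->
  exists2 C : R, 0 <= C & forall x, p * x ^+ 2 + q * x ^+ 3 <= g * x ^+ 4 + C.
Proof.
move=> g0; set k := p + q ^+ 2 / (2 * g).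
exists (k ^+ 2 / (2 * g)) => [|x]; first by rewrite divr_ge0 ?sqr_ge0 //; lra.
have cubic : q * x ^+ 3 <= g / 2 * x ^+ 4 + q ^+ 2 / (2 * g) * x ^+ 2.
  have e : g / 2 * x ^+ 4 + q ^+ 2 / (2 * g) * x ^+ 2 - q * x ^+ 3
         = g / 2 * (x * (x - q / g)) ^+ 2 by field; lra.
  have : 0 <= g / 2 * (x * (x - q / g)) ^+ 2 by rewrite mulr_ge0 ?sqr_ge0 //; lra.
  lra.
have quadratic : k * x ^+ 2 <= g / 2 * x ^+ 4 + k ^+ 2 / (2 * g).
  have e : g / 2 * x ^+ 4 + k ^+ 2 / (2 * g) - k * x ^+ 2
         = g / 2 * (x ^+ 2 - k / g) ^+ 2 by field; lra.
  have : 0 <= g / 2 * (x ^+ 2 - k / g) ^+ 2 by rewrite mulr_ge0 ?sqr_ge0 //; lra.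
  lra.
rewrite /k in quadratic *; lra.
Qed.

Lemma mix_lower_bound (R : realFieldType) (m C : R) : 0 < m -> 0 <= C ->
  exists2 l : R, 0 < l &
    forall e w : R, m <= e -> w - C <= e -> l * w + m / 2 <= e.
Proof.
(* [e] dominates the convex combination of the two bounds with weight [l] on
   [w - C]; this [l] makes the two constant terms add up to [m / 2]. *)
move=> m0 C0; exists (m / (2 * (m + C))) => [|e w me we]; first by rewrite divr_gt0 //; lra.
have lmC : m / (2 * (m + C)) * (m + C) = m / 2 by field; lra.
have l0 : 0 <= m / (2 * (m + C)) by rewrite divr_ge0 //; lra.
have l1 : 0 <= 1 - m / (2 * (m + C)) by rewrite subr_ge0 ler_pdivrMr; lra.
have := ler_wpM2l l0 we; have := ler_wpM2l l1 me; lra.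
Qed.

Lemma quadratic_le_growth (R : realFieldType) (p q s y : R) :
  0 <= p -> 0 <= q -> 0 <= s -> 0 <= y ->
  p + q * y + s * y ^+ 2 <= (p + q + s) * (1 + y ^+ 2).
Proof.
move=> p0 q0 s0 y0; have y_le : y <= 1 + y ^+ 2 by have := sqr_ge0 (y - 1); nra.
nra.
Qed.

Lemma cubic_le_growth (R : realFieldType) (p q s x : R) :
  0 <= p -> 0 <= q -> 0 <= s -> 0 <= x ->
  p * x + q * x ^+ 2 + s * x ^+ 3 <= (p + q + s) * ((1 + x) * (1 + x ^+ 2)).
Proof.
move=> p0 q0 s0 x0.
have e : (1 + x) * (1 + x ^+ 2) = 1 + x + x ^+ 2 + x ^+ 3 by ring.
have x2 : 0 <= x ^+ 2 := sqr_ge0 x; have x3 : 0 <= x ^+ 3 := exprn_ge0 3 x0.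
rewrite e; nra.
Qed.

Lemma normr_invB_le (R : realFieldType) (r s : R) : 0 < r -> 0 < s ->
  `|s^-1 - r^-1| <= `|s ^+ 2 - r ^+ 2| / (s ^+ 2 * r).
Proof.
move=> r0 s0.
have -> : s^-1 - r^-1 = (s - r) * s / (s ^+ 2 * r) * (-1).
  by field; rewrite (gt_eqF r0) (gt_eqF s0).
rewrite subr_sqr normrM normrN1 mulr1 !normrM (gtr0_norm s0) (gtr0_norm (addr_gt0 s0 r0)).
have d0 : 0 < (s ^+ 2 * r)^-1 by rewrite invr_gt0 mulr_gt0 ?exprn_gt0.
by rewrite (gtr0_norm d0) ler_wpM2r ?(ltW d0) // ler_wpM2l // lerDl (ltW r0).
Qed.

Lemma ler_div_bound (R : realFieldType) (k D r N W : R) :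
  0 < k -> 0 < D -> k * D <= r -> 0 <= W -> N <= W * D -> N / r <= W / k.
Proof.
move=> k0 D0 kDr W0 NW; have r0 : 0 < r := lt_le_trans (mulr_gt0 k0 D0) kDr.
rewrite ler_pdivrMr // (le_trans NW) // (_ : W / k * r = W * (r / k)); last first.
  by rewrite mulrAC mulrA.
by rewrite ler_wpM2l // ler_pdivlMr // mulrC.
Qed.

Section Frobenius.
Variable R : realType.
Implicit Types A : 'M[R]_3.

Lemma sumsqr_ge0 A : 0 <= \sum_(i < 3) \sum_(j < 3) A i j ^+ 2.
Proof. by apply: sumr_ge0 => i _; apply: sumr_ge0 => j _; apply: sqr_ge0. Qed.

Lemma normr_le_frob A i j : `|A i j| <= frob_norm A.
Proof.
rewrite -sqrtr_sqr ler_sqrt ?sumsqr_ge0 // (bigD1 i) //= (bigD1 j) //= -addrA lerDl.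
by rewrite addr_ge0 ?sumr_ge0 // => *; rewrite ?sumr_ge0 // => *; apply: sqr_ge0.
Qed.

Lemma frob_le_l1norm A : frob_norm A <= l1norm A.
Proof.
rewrite -(ger0_norm (l1norm_ge0 A)) -sqrtr_sqr ler_sqrt ?sqr_ge0 //.
rewrite expr2 mulr_suml; apply: ler_sum => i _; rewrite mulr_suml; apply: ler_sum => j _.
by rewrite -real_normK ?num_real // expr2 ler_wpM2l ?normr_le_l1norm.
Qed.

Lemma l1norm_le_frob A : l1norm A <= 9 * frob_norm A.
Proof.
apply: (@le_trans _ _ (\sum_(i < 3) \sum_(j < 3) frob_norm A)).
  by apply: ler_sum => i _; apply: ler_sum => j _; apply: normr_le_frob.
by rewrite !big_ord_recr !big_ord0 /=; lra.
Qed.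

Lemma tr_sqr_sym A : symm3 A -> \tr (A *m A) = frob_norm A ^+ 2.
Proof.
move=> symA; rewrite sqr_sqrtr ?sumsqr_ge0 //; apply: eq_bigr => i _.
rewrite mxE; apply: eq_bigr => j _.
by rewrite -[in A j i]symA mxE expr2.
Qed.

End Frobenius.

Section LdGEstimates.
Variables (R : realType) (a b c A0 : R).
Hypothesis c_gt0 : 0 < c.
Implicit Types X Y : 'M[R]_3.

Local Notation S := (ldg_S a b c).
Local Notation E := (ldg_energy a b c A0).

Lemma ldg_S_sub X Y : S Y - S X =
  a *: (Y - X) - b *: (Y *m Y - X *m X)
  + (b / 3 * (\tr (Y *m Y) - \tr (X *m X))) *: 1%:M
  + (c * \tr (Y *m Y)) *: (Y - X) + (c * (\tr (Y *m Y) - \tr (X *m X))) *: X.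
Proof. by apply/matrixP => i j; rewrite !mxE; ring. Qed.

Lemma l1norm_ldg_S_sub X Y : l1norm X <= l1norm Y ->
  l1norm (S Y - S X) <=
  (`|a| + 4 * `|b| * l1norm Y + 3 * c * l1norm Y ^+ 2) * l1norm (Y - X).
Proof.
move=> leXY.
have l1normD5 (A1 A2 A3 A4 A5 : 'M[R]_3) : l1norm (A1 - A2 + A3 + A4 + A5) <=
    l1norm A1 + l1norm A2 + l1norm A3 + l1norm A4 + l1norm A5.
  have := l1normD (A1 - A2 + A3 + A4) A5; have := l1normD (A1 - A2 + A3) A4.
  have := l1normD (A1 - A2) A3; have := l1normB A1 A2; lra.
rewrite ldg_S_sub; apply: le_trans (l1normD5 _ _ _ _ _) _.
rewrite !l1normZ l1norm1 !normrM (gtr0_norm c_gt0) normfV normr_nat.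
have hT := normr_tr_sqr_sub_le leXY; have c0 := ltW c_gt0.
have := ler_wpM2l (normr_ge0 b) hT.
have := ler_wpM2l (normr_ge0 b) (l1norm_sqr_sub_le leXY).
have := ler_wpM2r (l1norm_ge0 (Y - X)) (ler_wpM2l c0 (normr_tr_sqr_le Y)).
have := ler_pM (mulr_ge0 c0 (normr_ge0 _)) (l1norm_ge0 X) (ler_wpM2l c0 hT) leXY.
have := normr_ge0 a; lra.
Qed.

Lemma l1norm_ldg_S X :
  l1norm (S X) <= `|a| * l1norm X + 2 * `|b| * l1norm X ^+ 2 + c * l1norm X ^+ 3.
Proof.
have htr := normr_tr_sqr_le X.
have hsq : l1norm (X *m X - (\tr (X *m X) / 3) *: 1%:M) <= 2 * l1norm X ^+ 2.
  apply: le_trans (l1normB _ _) _; rewrite l1normZ l1norm1 normrM normfV normr_nat.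
  have : l1norm (X *m X) <= l1norm X ^+ 2 by rewrite expr2 l1normM.
  lra.
have hc : `|c * \tr (X *m X)| * l1norm X <= c * l1norm X ^+ 3.
  rewrite normrM (gtr0_norm c_gt0) -mulrA ler_wpM2l ?(ltW c_gt0) // exprSr.
  by rewrite ler_wpM2r ?l1norm_ge0.
apply: le_trans (l1normD _ _) _; apply: le_trans (lerD (l1normB _ _) (lexx _)) _.
rewrite !l1normZ; have := ler_wpM2l (normr_ge0 b) hsq; lra.
Qed.

Lemma ldg_energy_sub X Y : E Y - E X =
  a / 2 * (\tr (Y *m Y) - \tr (X *m X)) - b / 3 * \tr (Y *m Y *m Y - X *m X *m X)
  + c / 4 * ((\tr (Y *m Y) - \tr (X *m X)) * (\tr (Y *m Y) + \tr (X *m X))).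
Proof. by rewrite linearB /ldg_energy /=; ring. Qed.

Lemma normr_ldg_energy_sub X Y : l1norm X <= l1norm Y ->
  `|E Y - E X| <=
  (`|a| * l1norm Y + `|b| * l1norm Y ^+ 2 + c * l1norm Y ^+ 3) * l1norm (Y - X).
Proof.
move=> leXY; rewrite ldg_energy_sub.
have x0 := l1norm_ge0 X; have d0 := l1norm_ge0 (Y - X).
have hT := normr_tr_sqr_sub_le leXY.
have hU : `|\tr (Y *m Y *m Y - X *m X *m X)| <= 3 * l1norm Y ^+ 2 * l1norm (Y - X).
  apply: le_trans (normr_tr_le_l1norm _) _; apply: le_trans (l1norm_cube_sub X Y) _.
  by rewrite ler_wpM2r //; nra.
have hs : `|\tr (Y *m Y) + \tr (X *m X)| <= 2 * l1norm Y ^+ 2.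
  apply: le_trans (ler_normD _ _) _.
  by have := normr_tr_sqr_le X; have := normr_tr_sqr_le Y; nra.
apply: le_trans (ler_normD _ _) _; apply: le_trans (lerD (ler_normB _ _) (lexx _)) _.
rewrite !normrM !normfV !normr_nat (gtr0_norm c_gt0).
have := ler_wpM2l (normr_ge0 a) hT; have := ler_wpM2l (normr_ge0 b) hU.
have := ler_wpM2l (ltW c_gt0) (ler_pM (normr_ge0 _) (normr_ge0 _) hT hs).
lra.
Qed.

End LdGEstimates.

Section Coercivity.
Variables (R : realType) (a b c A0 m : R).
Hypotheses (c_gt0 : 0 < c) (A0_ge0 : 0 <= A0) (m_gt0 : 0 < m).
Local Notation E := (ldg_energy a b c A0).
Hypothesis E_ge_m : forall Q : 'M[R]_3, symm3 Q -> m <= E Q.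

Lemma ldg_energy_ge_quartic (Q : 'M[R]_3) : symm3 Q ->
  c / 4 * (l1norm Q ^+ 2 / 81) ^+ 2
  - (`|a| / 2 * l1norm Q ^+ 2 + `|b| / 3 * l1norm Q ^+ 3) + A0 <= E Q.
Proof.
move=> symQ; have x0 := l1norm_ge0 Q.
have tr_lo : l1norm Q ^+ 2 / 81 <= \tr (Q *m Q).
  have x9 : 0 <= l1norm Q / 9 <= frob_norm Q.
    by rewrite divr_ge0 // ler_pdivrMr // mulrC l1norm_le_frob.
  rewrite tr_sqr_sym // (_ : _ / 81 = (l1norm Q / 9) ^+ 2); last by field.
  by case/andP: x9 => x9l x9r; rewrite !expr2 ler_pM.
have tr_hi := le_trans (ler_norm _) (normr_tr_sqr_le Q).
have tr3 : `|\tr (Q *m Q *m Q)| <= l1norm Q ^+ 3.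
  apply: le_trans (normr_tr_le_l1norm _) _; apply: le_trans (l1normM3 _ _ _) _.
  by rewrite -!expr2 -exprSr.
have t0 : 0 <= \tr (Q *m Q) by apply: le_trans tr_lo; rewrite divr_ge0 ?sqr_ge0.
have ha : `|a * \tr (Q *m Q)| <= `|a| * l1norm Q ^+ 2.
  by rewrite normrM ler_wpM2l // ger0_norm.
have hb : `|b * \tr (Q *m Q *m Q)| <= `|b| * l1norm Q ^+ 3.
  by rewrite normrM ler_wpM2l.
have hc : (l1norm Q ^+ 2 / 81) ^+ 2 <= \tr (Q *m Q) ^+ 2.
  by rewrite !expr2 ler_pM // divr_ge0 ?sqr_ge0.
move: ha hb; rewrite !ler_norml => /andP[ha _] /andP[_ hb].
rewrite /ldg_energy; have := ler_wpM2l (ltW c_gt0) hc; lra.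
Qed.

Lemma ldg_energy_coercive : exists2 al : R, 0 < al &
  forall Q : 'M[R]_3, symm3 Q -> al * (1 + l1norm Q ^+ 2) ^+ 2 <= 2 * E Q.
Proof.
(* Half of the quartic coefficient [c / 4 / 81 ^+ 2] absorbs the quadratic and
   cubic terms; the other half survives. *)
have g_gt0 : 0 < c / 8 / 81 ^+ 2 by rewrite !divr_gt0 ?exprn_gt0.
have [C C_ge0 hC] := quartic_dominates (`|a| / 2) (`|b| / 3) g_gt0.
have [l l_gt0 mix] := mix_lower_bound m_gt0 C_ge0.
have [al al_gt0 [al_lg al_m]] :
    exists2 al : R, 0 < al & al <= l * (c / 8 / 81 ^+ 2) /\ al <= m / 2.
  exists (Num.min (l * (c / 8 / 81 ^+ 2)) (m / 2)); last by rewrite !ge_min !lexx orbT.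
  by rewrite lt_min mulr_gt0 //= divr_gt0.
exists al => // Q symQ.
have E_ge : c / 8 / 81 ^+ 2 * l1norm Q ^+ 4 - C <= E Q.
  apply: le_trans (ldg_energy_ge_quartic symQ); have := hC (l1norm Q).
  rewrite (_ : c / 4 * (l1norm Q ^+ 2 / 81) ^+ 2 = 2 * (c / 8 / 81 ^+ 2 * l1norm Q ^+ 4)).
    move: A0_ge0; lra.
  by rewrite expr_div_n -exprM; field.
have := mix _ _ (E_ge_m symQ) E_ge.
have sqr_le : (1 + l1norm Q ^+ 2) ^+ 2 <= 2 * (1 + l1norm Q ^+ 4).
  by have := sqr_ge0 (1 - l1norm Q ^+ 2); lra.
have := ler_wpM2l (ltW al_gt0) sqr_le.
have := ler_wpM2r (exprn_ge0 4 (l1norm_ge0 Q)) al_lg.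
lra.
Qed.

Lemma ldg_r_coercive : exists2 be : R, 0 < be &
  forall Q : 'M[R]_3, symm3 Q -> be * (1 + l1norm Q ^+ 2) <= ldg_r a b c A0 Q.
Proof.
have [al al_gt0 E_ge] := ldg_energy_coercive.
exists (Num.sqrt al) => [|Q symQ]; first by rewrite sqrtr_gt0.
have u0 : 0 <= 1 + l1norm Q ^+ 2 by rewrite addr_ge0 ?sqr_ge0.
have E_ge0 : 0 <= 2 * E Q.
  by apply: le_trans (E_ge Q symQ); rewrite mulr_ge0 ?sqr_ge0 ?(ltW al_gt0).
rewrite /ldg_r -(ger0_norm u0) -sqrtr_sqr -sqrtrM ?(ltW al_gt0) //.
by rewrite ler_sqrt ?E_ge.
Qed.
End Coercivity.

Lemma ldg_r_sqr (R : realType) (a b c A0 : R) (Q : 'M[R]_3) :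
  0 < ldg_r a b c A0 Q -> ldg_r a b c A0 Q ^+ 2 = 2 * ldg_energy a b c A0 Q.
Proof. by rewrite sqrtr_gt0 => /ltW; apply: sqr_sqrtr. Qed.

Section Lipschitz.
Variables (R : realType) (a b c A0 be : R).
Hypotheses (c_gt0 : 0 < c) (be_gt0 : 0 < be).
Hypothesis r_ge : forall Q : 'M[R]_3, symm3 Q -> be * (1 + l1norm Q ^+ 2) <= ldg_r a b c A0 Q.
Implicit Types X Y : 'M[R]_3.

Local Notation r := (ldg_r a b c A0).
Local Notation S := (ldg_S a b c).
Local Notation E := (ldg_energy a b c A0).
Local Notation P := (ldg_P a b c A0).

Lemma ldg_r_gt0 X : symm3 X -> 0 < r X.
Proof.
by move=> /r_ge; apply: lt_le_trans; rewrite mulr_gt0 // ltr_pwDl ?sqr_ge0.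
Qed.

Lemma ldg_S_sub_div_r_le X Y : symm3 Y -> l1norm X <= l1norm Y ->
  (r Y)^-1 * l1norm (S Y - S X) <= (`|a| + 4 * `|b| + 3 * c) / be * l1norm (Y - X).
Proof.
move=> symY leXY; have y0 := le_trans (l1norm_ge0 X) leXY.
have u_gt0 : 0 < 1 + l1norm Y ^+ 2 by rewrite ltr_pwDl ?sqr_ge0.
have na := normr_ge0 a; have nb := normr_ge0 b; have c0 := ltW c_gt0.
rewrite mulrC mulrAC; apply: (ler_div_bound be_gt0 u_gt0 (r_ge symY)).
  by rewrite mulr_ge0 ?l1norm_ge0 //; lra.
apply: le_trans (l1norm_ldg_S_sub a b c_gt0 leXY) _.
by rewrite [leRHS]mulrAC ler_wpM2r ?l1norm_ge0 // quadratic_le_growth //; lra.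
Qed.

Lemma ldg_r_invB_S_le X Y : symm3 X -> symm3 Y -> l1norm X <= l1norm Y ->
  `|(r Y)^-1 - (r X)^-1| * l1norm (S X) <=
  4 * (`|a| + 2 * `|b| + c) * (`|a| + `|b| + c) / be ^+ 3 * l1norm (Y - X).
Proof.
move=> symX symY leXY.
have x0 := l1norm_ge0 X; have d0 := l1norm_ge0 (Y - X).
have na := normr_ge0 a; have nb := normr_ge0 b; have c0 := ltW c_gt0.
have rX_gt0 := ldg_r_gt0 symX; have rY_gt0 := ldg_r_gt0 symY.
have u_gt0 : 0 < 1 + l1norm Y ^+ 2 by rewrite ltr_pwDl ?sqr_ge0.
have v_gt0 : 0 < 1 + l1norm X ^+ 2 by rewrite ltr_pwDl ?sqr_ge0.
set u := 1 + l1norm Y ^+ 2 in u_gt0 *; set v := 1 + l1norm X ^+ 2 in v_gt0 *.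
have hE : `|E Y - E X| <= (`|a| + `|b| + c) * ((1 + l1norm Y) * u) * l1norm (Y - X).
  apply: le_trans (normr_ldg_energy_sub a b A0 c_gt0 leXY) _.
  by rewrite ler_wpM2r // cubic_le_growth //; lra.
have hS : l1norm (S X) <= (`|a| + 2 * `|b| + c) * ((1 + l1norm X) * v).
  by apply: le_trans (l1norm_ldg_S a b c_gt0 X) _; rewrite cubic_le_growth //; lra.
have hxy : (1 + l1norm Y) * (1 + l1norm X) <= 2 * u.
  have := sqr_ge0 (1 - l1norm Y); have : 0 <= 1 + l1norm Y by lra.
  rewrite /u; nra.
apply: le_trans (ler_wpM2r (l1norm_ge0 _) (normr_invB_le rX_gt0 rY_gt0)) _.
rewrite (_ : `|r Y ^+ 2 - r X ^+ 2| = 2 * `|E Y - E X|); last first.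
  by rewrite !ldg_r_sqr // -mulrBr normrM ger0_norm.
rewrite mulrAC [leRHS]mulrAC.
apply: (ler_div_bound (k := be ^+ 3) (D := u ^+ 2 * v)).
- by rewrite exprn_gt0.
- by rewrite mulr_gt0 ?exprn_gt0.
- rewrite (_ : be ^+ 3 * (u ^+ 2 * v) = (be * u) ^+ 2 * (be * v)); last by ring.
  apply: ler_pM; [exact: sqr_ge0 | by rewrite mulr_ge0 ?(ltW be_gt0) ?(ltW v_gt0) | | exact: r_ge].
  by rewrite ler_sqr ?nnegrE ?(ltW rY_gt0) ?r_ge // mulr_ge0 ?(ltW be_gt0) ?(ltW u_gt0).
- by rewrite !mulr_ge0 //; lra.
- have K_ge0 : 0 <= (`|a| + 2 * `|b| + c) * (`|a| + `|b| + c) * u * v * l1norm (Y - X).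
    by rewrite !mulr_ge0 ?(ltW u_gt0) ?(ltW v_gt0) //; lra.
  have := ler_pM (normr_ge0 _) (l1norm_ge0 _) hE hS.
  have := ler_wpM2l K_ge0 hxy.
  lra.
Qed.

Lemma l1norm_ldg_P_sub X Y : symm3 X -> symm3 Y -> l1norm X <= l1norm Y ->
  l1norm (P Y - P X) <=
  ((`|a| + 4 * `|b| + 3 * c) / be
   + 4 * (`|a| + 2 * `|b| + c) * (`|a| + `|b| + c) / be ^+ 3) * l1norm (Y - X).
Proof.
move=> symX symY leXY.
have -> : P Y - P X = (r Y)^-1 *: (S Y - S X) + ((r Y)^-1 - (r X)^-1) *: S X.
  by rewrite /ldg_P scalerBr scalerBl addrA subrK.
apply: le_trans (l1normD _ _) _.
rewrite !l1normZ (gtr0_norm (_ : 0 < (r Y)^-1)) ?invr_gt0 ?ldg_r_gt0 // mulrDl.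
by rewrite lerD ?ldg_S_sub_div_r_le ?ldg_r_invB_S_le.
Qed.

End Lipschitz.

Lemma ldg_P_l1_lipschitz (R : realType) (a b c A0 m : R) :
    0 < c -> 0 <= A0 -> 0 < m ->
    (forall Q : 'M[R]_3, symm3 Q -> m <= ldg_energy a b c A0 Q) ->
  exists2 L : R, 0 < L &
    forall X Y : 'M[R]_3, symm3 X -> symm3 Y ->
      l1norm (ldg_P a b c A0 Y - ldg_P a b c A0 X) <= L * l1norm (Y - X).
Proof.
move=> c_gt0 A0_ge0 m_gt0 E_ge_m.
have [be be_gt0 r_ge] := ldg_r_coercive c_gt0 A0_ge0 m_gt0 E_ge_m.
have na := normr_ge0 a; have nb := normr_ge0 b.
exists ((`|a| + 4 * `|b| + 3 * c) / be
   + 4 * (`|a| + 2 * `|b| + c) * (`|a| + `|b| + c) / be ^+ 3).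
  have : 0 < (`|a| + 4 * `|b| + 3 * c) / be by rewrite divr_gt0 //; lra.
  have : 0 <= 4 * (`|a| + 2 * `|b| + c) * (`|a| + `|b| + c) / be ^+ 3.
    by rewrite divr_ge0 ?exprn_ge0 ?(ltW be_gt0) // !mulr_ge0 //; lra.
  lra.
move=> X Y symX symY.
wlog leXY : X Y symX symY / l1norm X <= l1norm Y => [hwlog|].
  have [|/ltW] := leP (l1norm X) (l1norm Y); first exact: hwlog.
  by move/(hwlog _ _ symY symX); rewrite -l1normN -[in X in _ <= X]l1normN !opprB.
exact: l1norm_ldg_P_sub.
Qed.

Theorem theorem4p11 (R : realType) (a b c A0 : R) :
  0 < c -> 0 < A0 ->
  (exists m : R, 0 < m /\
     forall Q : 'M[R]_3, symm3 Q -> m <= ldg_energy a b c A0 Q) ->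
  exists L : R, 0 < L /\
    forall Q dQ : 'M[R]_3, symm3 Q -> symm3 dQ ->
      frob_norm (ldg_P a b c A0 (Q + dQ) - ldg_P a b c A0 Q)
        <= L * frob_norm dQ.
Proof.
move=> c_gt0 A0_gt0 [m [m_gt0 E_ge_m]].
have [L L_gt0 lipL] := ldg_P_l1_lipschitz c_gt0 (ltW A0_gt0) m_gt0 E_ge_m.
exists (9 * L); split=> [|Q dQ symQ symdQ]; first by rewrite mulr_gt0.
have symQdQ : symm3 (Q + dQ) by rewrite /symm3 linearD /= symQ symdQ.
apply: le_trans (frob_le_l1norm _) _; apply: le_trans (lipL _ _ symQ symQdQ) _.
by rewrite addrAC subrr add0r [9 * L]mulrC -mulrA ler_wpM2l ?l1norm_le_frob ?(ltW L_gt0).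
Qed.
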